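(* Let $H=(V,E)$ be a $3$-uniform hypergraph with at least one edge, without pendant vertices (vertices of degree $1$), whose $2$-intersection graph $\mathcal L_2(H)$ is connected. Then $H$ is eulerian.
   Context: A hypergraph $H=(V,E)$ consists of a finite nonempty vertex set $V$, a finite edge set $E$ disjoint from $V$, and an incidence function assigning to each edge $e\in E$ a subset of $V$ (also denoted $e$); distinct edges may have the same vertex set. $H$ is $3$-uniform if $|e|=3$ for all $e\in E$. The degree of a vertex is the number of edges containing it. A walk is a sequence $W=v_0e_1v_1e_2\cdots e_kv_k$ with $v_i\in V$, $e_i\in E$, such that for each $i$, $v_{i-1}\ne v_i$ and $v_{i-1},v_i\in e_i$. $W$ is closed if $k\ge 2$ and $v_0=v_k$; it is a strict trail if $e_1,\dots,e_k$ are pairwise distinct. An Euler tour of $H$ is a closed strict trail traversing every edge of $H$; $H$ is eulerian if it has one. The $2$-intersection graph $\mathcal L_2(H)$ is the simple graph with vertex set $E$ in which distinct $e,e'$ are adjacent iff $|e\cap e'|=2$. *)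

From mathcomp Require Import all_boot.
Set Implicit Arguments. Unset Strict Implicit. Unset Printing Implicit Defensive.

(* A hypergraph H = (V, E) is given by finite types V (vertices), E (edges)
   and an incidence function inc : E -> {set V}; distinct edges may share
   the same vertex set. *)

Section Hyper.
Variables (V E : finType) (inc : E -> {set V}).

Definition three_uniform : Prop := forall e : E, #|inc e| = 3.

Definition hdeg (v : V) : nat := #|[set e : E | v \in inc e]|.

Definition no_pendant : Prop := forall v : V, hdeg v <> 1.

Definition L2adj : rel E :=
  fun e e' => (e != e') && (#|inc e :&: inc e'| == 2).

Definition L2_connected : Prop := forall e e' : E, connect L2adj e e'.

(* A walk v0 e1 v1 ... ek vk is represented by v0 together with the
   sequence [:: (e1, v1); ...; (ek, vk)]. *)
Fixpoint is_walk (v : V) (s : seq (E * V)) : bool :=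
  match s with
  | [::] => true
  | (e, w) :: s' => [&& v != w, v \in inc e, w \in inc e & is_walk w s']
  end.

Definition closed_walk (v0 : V) (s : seq (E * V)) : bool :=
  [&& is_walk v0 s, 2 <= size s & last v0 (map snd s) == v0].

Definition strict_trail (v0 : V) (s : seq (E * V)) : bool :=
  is_walk v0 s && uniq (map fst s).

Definition euler_tour (v0 : V) (s : seq (E * V)) : bool :=
  [&& closed_walk v0 s, strict_trail v0 s &
      all (fun e => e \in map fst s) (enum E)].

Definition eulerian : Prop := exists (v0 : V) (s : seq (E * V)), euler_tour v0 s.

End Hyper.

From mathcomp Require Import all_boot zify.
Set Implicit Arguments. Unset Strict Implicit. Unset Printing Implicit Defensive.

(* Choose in every edge e a pair P e of two of its vertices so that every vertex
   lies in an even number of pairs; a closed trail of the multigraph with edges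
   P e that uses every edge is an Euler tour of H.

   Adding edges one at a time along the connected graph
   L_2(H), every new edge shares two vertices with the previous ones, and one
   keeps the invariant that every vertex set S of the current edge set F with
   |S| <= |F| and |S| = |F| (mod 2) is the set of vertices left out an odd number
   of times by some choice of one left-out vertex per edge of F.  As no degree
   is 1, the vertices of odd degree form such a set for F = E, and leaving them
   out gives the pairs.

   Trails can then be lengthened until they use every edge.  An open trail
   extends at its end, by parity.  A closed trail missing some edge g misses one
   that shares two vertices with a used edge e; if P g meets P e the trail is
   rotated and extended through g, and otherwise exchanging common vertices of e, g
   between P e and P g keeps all degrees even and opens the trail into a longer
   one. *)

Local Notation walk_end v s := (last v (map snd s)).

Section FinsetFacts.
Variable T : finType.
Implicit Types (A B C S : {set T}) (v w x : T).

Lemma card2_other A x : #|A| = 2 -> x \in A -> exists2 y, y \in A & y != x.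
Proof.
move=> A2 xA; have : #|A :\ x| = 1 by move: A2; rewrite (cardsD1 x) xA => -[].
by move/eqP/cards1P=> -[y Ax]; exists y; move: (set11 y); rewrite -Ax !inE => /andP[].
Qed.

Lemma card2_eq A x y : #|A| = 2 -> x \in A -> y \in A -> x != y -> A = [set x; y].
Proof.
move=> A2 xA yA xy; apply/esym/eqP; rewrite eqEcard A2 cards2 xy leqnn andbT.
by apply/subsetP=> z; rewrite !inE => /orP[] /eqP->.
Qed.

Lemma cards2_neq x y : #|[set x; y]| = 2 -> x != y.
Proof. by rewrite cards2; case: (x != y). Qed.

Lemma meet_of_large_subsets A B C :
  A \subset C -> B \subset C -> #|C| < #|A| + #|B| -> exists x, x \in A :&: B.
Proof.
move=> AC BC; rewrite -cardsUI => ltC; apply/set0Pn/negP => /eqP AB0.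
move: ltC; rewrite AB0 cards0 addn0 ltnNge.
by rewrite subset_leq_card // subUset AC BC.
Qed.

Lemma card_set_sum (a : pred T) : #|[set x | a x]| = \sum_x a x.
Proof. by rewrite -sum1dep_card big_mkcond; apply: eq_bigr => x _; case: (a x). Qed.

Lemma odd_sum (f : T -> nat) : odd (\sum_x f x) = odd #|[set x | odd (f x)]|.
Proof.
rewrite card_set_sum; elim: (index_enum T) => [|x r IH]; rewrite ?big_nil //.
by rewrite !big_cons !oddD IH oddb.
Qed.

Definition toggle S w := if w \in S then S :\ w else w |: S.

Lemma in_toggle S w v : (v \in toggle S w) = (v \in S) (+) (v == w).
Proof.
rewrite /toggle; case: (eqVneq v w) => [->|vw]; case: ifP => wS;
  by rewrite !inE ?eqxx ?wS ?(negbTE vw) ?addbF ?addbT.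
Qed.

Lemma card_toggle S w : #|toggle S w| = if w \in S then #|S|.-1 else #|S|.+1.
Proof.
by rewrite /toggle; case: ifP => wS; rewrite ?cardsU1 ?wS // (cardsD1 w S) wS.
Qed.

Lemma odd_card_toggle S w : odd #|toggle S w| = ~~ odd #|S|.
Proof.
rewrite card_toggle; case: ifP => wS //=.
by rewrite (cardsD1 w S) wS /= negbK.
Qed.

Lemma mem_set2_nat x y z : x != y ->
  (z \in [set x; y] : nat) = (z == x) + (z == y).
Proof. by move=> xy; rewrite !inE; case: eqVneq => // ->; rewrite (negbTE xy). Qed.

Lemma count_uniq_card (a : pred T) (l : seq T) :
  uniq l -> (forall x, a x -> x \in l) -> count a l = #|[set x | a x]|.
Proof.
move=> uniq_l al; rewrite -size_filter -(card_uniqP (filter_uniq _ uniq_l)).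
by apply: eq_card => x; rewrite mem_filter inE; case: (boolP (a x)) => // /al.
Qed.

End FinsetFacts.

Section Degrees.
Variables (V E : finType) (inc : E -> {set V}).

Lemma sum_hdeg : \sum_v hdeg inc v = \sum_e #|inc e|.
Proof.
under eq_bigr do rewrite /hdeg card_set_sum.
rewrite exchange_big; apply: eq_bigr => e _; rewrite -card_set_sum.
by apply: eq_card => v; rewrite inE.
Qed.

Lemma hdeg_setD1 (o : E -> V) v : (forall e, o e \in inc e) ->
  hdeg inc v = hdeg (fun e => inc e :\ o e) v + #|[set e | o e == v]|.
Proof.
move=> oin; rewrite /hdeg -cardsUI.
rewrite (_ : _ :&: _ = set0) ?cards0 ?addn0.
  apply: eq_card => e; rewrite !inE.
  by case: (eqVneq (o e) v) => [<-|] /=; rewrite ?oin ?orbF ?orbT.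
by apply/setP=> e; rewrite !inE; case: eqVneq; rewrite ?andbF.
Qed.

Lemma hdeg_eq2 (inc' : E -> {set V}) e g z : e != g ->
  (forall f, f != e -> f != g -> inc' f = inc f) ->
  (z \in inc' e) + (z \in inc' g) = (z \in inc e) + (z \in inc g) ->
  hdeg inc' z = hdeg inc z.
Proof.
move=> eg same_inc hz; rewrite /hdeg !card_set_sum.
rewrite (bigD1 e) // [in RHS](bigD1 e) //=.
rewrite (bigD1 g) 1?eq_sym // [in RHS](bigD1 g) 1?eq_sym //=.
rewrite !addnA hz; congr (_ + _); apply: eq_bigr => f /andP[fg fe].
by rewrite same_inc.
Qed.

End Degrees.

Section Realizable.
Variables (V E : finType) (inc : E -> {set V}).
Hypothesis inc3 : three_uniform inc.
Implicit Types (F : {set E}) (S : {set V}).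

Definition verts F : {set V} := \bigcup_(e in F) inc e.

(* [o] picks in each edge of [F] the vertex left out of its pair. *)
Definition realizes F (o : E -> V) S :=
  (forall e, e \in F -> o e \in inc e) /\
  (forall v, odd #|[set e in F | o e == v]| = (v \in S)).

Definition realizable F := forall S, S \subset verts F -> #|S| <= #|F| ->
  ~~ odd (#|S| + #|F|) -> exists o, realizes F o S.

Definition tight F := #|verts F| <= #|F| + 2.

Lemma verts1 e : verts [set e] = inc e.
Proof. by rewrite /verts big_set1. Qed.

Lemma vertsU1 e F : verts (e |: F) = inc e :|: verts F.
Proof. by rewrite /verts bigcup_setU big_set1. Qed.

Lemma realizable1 e : realizable [set e].
Proof.
move=> S; rewrite verts1 cards1 => Se S1 parS.
have /cards1P[s defS] : #|S| == 1 by move: S1 parS; case: #|S| => [|[|]].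
have se : s \in inc e by apply/(subsetP Se); rewrite defS set11.
exists (fun=> s); split=> [f|v]; first by rewrite inE => /eqP->.
rewrite defS inE eq_sym; case: eqVneq => _; rewrite setIdE ?setIT ?setI0 ?cards1 ?cards0 //.
Qed.

Lemma tight1 e : tight [set e].
Proof. by rewrite /tight verts1 inc3 cards1. Qed.

Lemma realizes_add F e w o S : e \notin F -> w \in inc e ->
  realizes F o (toggle S w) -> realizes (e |: F) (fun f => if f == e then w else o f) S.
Proof.
move=> eF we [oF oS]; split=> [f|v].
  by rewrite !inE; case: eqVneq => [->|_] /=; [move=> _ | apply: oF].
set X := [set f in F | o f == v].
have -> : [set f in e |: F | (if f == e then w else o f) == v] =
          if w == v then e |: X else X.
  apply/setP=> f; rewrite !inE; case: (eqVneq f e) => [->|fe] /=;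
    by case: (w == v); rewrite ?inE ?eqxx ?(negbTE eF) ?(negbTE fe).
have := oS v; rewrite in_toggle -/X => oX.
case: eqVneq => [wv|wv]; last by rewrite oX eq_sym (negbTE wv) addbF.
have eX : e \notin X by rewrite inE (negbTE eF).
by rewrite cardsU1 eX add1n /= oX wv eqxx addbT negbK.
Qed.

Section AddEdge.
Variables (F : {set E}) (e : E).
Hypotheses (eF : e \notin F) (tightF : tight F) (shared : 2 <= #|inc e :&: verts F|).

Lemma card_private_le1 : #|inc e :\: verts F| <= 1.
Proof. by move: (cardsID (verts F) (inc e)); rewrite inc3; lia. Qed.

Lemma tight_add : tight (e |: F).
Proof.
move: tightF (cardsUI (inc e) (verts F)) (cardsID (verts F) (inc e)).
by rewrite /tight vertsU1 cardsU1 (negbTE eF) inc3; lia.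
Qed.

Lemma exists_toggle_vertex S : S \subset inc e :|: verts F -> #|S| <= #|F|.+1 ->
  ~~ odd (#|S| + #|F|.+1) ->
  exists2 w, w \in inc e & toggle S w \subset verts F /\ #|toggle S w| <= #|F|.
Proof.
move=> Se SF parS; rewrite /toggle.
(* At most one vertex of e is new to F; toggle it if it lies in S. *)
case: (set_0Vmem (S :&: (inc e :\: verts F))) => [no_private | [c]]; last first.
  rewrite !inE => /and3P[cS cF ce]; exists c => //; rewrite cS.
  split; last by move: SF; rewrite (cardsD1 c S) cS.
  apply/subsetP=> x; rewrite !inE => /andP[xc xS].
  have /card_le1_eqP pe := card_private_le1.
  apply: contraT => xF.
  have := subsetP Se x xS; rewrite inE (negbTE xF) orbF => xe.
  by move: xc; rewrite (pe x c) ?eqxx // !inE ?xF ?xe ?cF ?ce.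
have SF' : S \subset verts F.
  apply/subsetP=> x xS; apply: contraT => xF.
  have := subsetP Se x xS; rewrite inE (negbTE xF) orbF => xe.
  have : x \in S :&: (inc e :\: verts F) by rewrite !inE xS xF xe.
  by rewrite no_private inE.
have [S_full | S_small] := eqVneq #|S| #|F|.+1.
  have [w] : exists w, w \in S :&: (inc e :&: verts F).
    by apply: meet_of_large_subsets SF' (subsetIr _ _) _; move: tightF; rewrite /tight; lia.
  rewrite !inE => /and3P[wS we _]; exists w; rewrite ?wS //.
  split; first exact: subset_trans (subsetDl _ _) SF'.
  by move: S_full; rewrite (cardsD1 w S) wS; lia.
have S_ne : #|S| != #|F|.
  by apply: contraNneq parS => ->; rewrite addnS /= addnn odd_double.
have /card_gt0P[w] : 0 < #|inc e :&: verts F| by lia.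
rewrite inE => /andP[we wF]; exists w => //; case: ifP => wS; split.
- exact: subset_trans (subsetDl _ _) SF'.
- by move: SF; rewrite (cardsD1 w S) wS; lia.
- by rewrite subUset sub1set wF.
- by rewrite cardsU1 wS; lia.
Qed.

Lemma realizable_add : realizable F -> realizable (e |: F).
Proof.
move=> realF S; rewrite vertsU1 cardsU1 (negbTE eF) add1n => Se SF parS.
have [w we [wF wS]] := exists_toggle_vertex Se SF parS.
have [|o realS] := realF (toggle S w) wF wS.
  by move: parS; rewrite !oddD odd_card_toggle /=; case: (odd #|S|); case: (odd #|F|).
by exists (fun f => if f == e then w else o f); apply: realizes_add.
Qed.

End AddEdge.
End Realizable.

Section EvenPairing.
Variables (V E : finType) (inc : E -> {set V}).

Definition pairing (P : E -> {set V}) := forall e, P e \subset inc e /\ #|P e| = 2.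

Definition even_degrees (P : E -> {set V}) := forall v, ~~ odd (hdeg P v).

Lemma L2adj_sym : symmetric (L2adj inc).
Proof. by move=> e f; rewrite /L2adj eq_sym setIC. Qed.

Lemma L2_boundary (F : {set E}) : L2_connected inc -> F != set0 -> F != setT ->
  exists e f, [/\ e \notin F, f \in F & L2adj inc e f].
Proof.
move=> conn /set0Pn[f fF]; rewrite eqEsubset subsetT /= => /subsetPn[x _ xF].
have [|no_boundary] := boolP [exists e, exists f, [&& e \notin F, f \in F & L2adj inc e f]].
  by case/existsP=> e /existsP[g /and3P[]]; exists e, g.
have closedF : closed (L2adj inc) (mem F).
  move=> a b ab; apply/idP/idP => [aF|bF]; apply: contraT => nF;
    move/existsPn: no_boundary => /(_ _)/existsPn nb.
  - by move: (nb b a); rewrite nF aF L2adj_sym ab.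
  - by move: (nb a b); rewrite nF bF ab.
by move: xF; rewrite -(closed_connect closedF (conn f x)) fF.
Qed.

Hypotheses (inc3 : three_uniform inc) (conn : L2_connected inc).

Lemma realizable_setT : 0 < #|E| -> realizable inc setT.
Proof.
move=> /card_gt0P[e0 _].
suff grow n F : #|~: F| = n -> F != set0 -> realizable inc F -> tight inc F ->
    realizable inc setT.
  apply: (grow _ [set e0] erefl _ (@realizable1 _ _ inc e0) (tight1 inc3 e0)).
  by apply/set0Pn; exists e0; rewrite set11.
elim: n F => [|n IH] F cF F0 realF tightF.
  suff -> : [set: E] = F by [].
  by apply/esym/eqP; rewrite eqEcard subsetT cardsT -(cardsC F) cF addn0 leqnn.
have FT : F != setT by apply/eqP => FT; move: cF; rewrite FT setCT cards0.
have [e [f [eF fF ef]]] := L2_boundary conn F0 FT.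
have shared : 2 <= #|inc e :&: verts inc F|.
  by move: ef => /andP[_ /eqP <-]; apply/subset_leq_card/setIS/bigcup_sup.
apply: (IH (e |: F) _ _ (realizable_add inc3 eF tightF shared realF)
             (tight_add inc3 eF tightF shared)).
- by move: (cardsC F) (cardsC (e |: F)); rewrite cardsU1 eF cF; lia.
- by apply/set0Pn; exists e; rewrite setU11.
Qed.

Lemma sum_hdeg3 : \sum_v hdeg inc v = 3 * #|E|.
Proof. by rewrite sum_hdeg (eq_bigr (fun=> 3)) // sum_nat_const mulnC cardT. Qed.

Lemma exists_even_pairing : 0 < #|E| -> no_pendant inc ->
  exists P, pairing P /\ even_degrees P.
Proof.
move=> E0 no_pend; pose S := [set v | odd (hdeg inc v)].
have SE : S \subset verts inc setT.
  apply/subsetP=> v; rewrite inE => odd_v.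
  have /card_gt0P[e] : 0 < hdeg inc v by case: (hdeg inc v) odd_v.
  by rewrite inE => ve; apply/bigcupP; exists e; rewrite ?inE.
have SE_card : #|S| <= #|E|.
  rewrite -(leq_pmul2l (isT : 0 < 3)) -sum_hdeg3 mulnC -sum_nat_const big_mkcond.
  apply: leq_sum => v _; rewrite inE.
  by move: (no_pend v); case: (hdeg inc v) => [|[|[|n]]] // _; case: ifP.
have [||o [oin oS]] := realizable_setT E0 SE; rewrite ?cardsT //.
  by rewrite oddD -odd_sum sum_hdeg3 oddM /=; case: (odd #|E|).
have oin' e : o e \in inc e by apply: oin; rewrite inE.
exists (fun e => inc e :\ o e); split=> [e|v].
  by rewrite subsetDl; move: (cardsD1 (o e) (inc e)); rewrite oin' inc3 => -[].
move: (oS v); rewrite inE setIdE setTI (hdeg_setD1 v oin') oddD.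
by case: odd; case: odd.
Qed.

End EvenPairing.

Section Walks.
Variables (V E : finType).
Implicit Types (P Q : E -> {set V}) (s : seq (E * V)).

Lemma is_walk_cat P v s1 s2 :
  is_walk P v (s1 ++ s2) = is_walk P v s1 && is_walk P (walk_end v s1) s2.
Proof. by elim: s1 v => [|[e w] s1 IH] v //=; rewrite IH !andbA. Qed.

Lemma strict_trail_rcons P v s e w :
  strict_trail P v (rcons s (e, w)) =
  [&& strict_trail P v s, e \notin map fst s, walk_end v s != w,
      walk_end v s \in P e & w \in P e].
Proof.
rewrite /strict_trail -cats1 is_walk_cat /= andbT cats1 map_rcons rcons_uniq.
by rewrite -!andbA; do !bool_congr.
Qed.

Lemma strict_trail_cons P v e w s :
  strict_trail P v ((e, w) :: s) =
  [&& v != w, v \in P e, w \in P e, e \notin map fst s & strict_trail P w s].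
Proof. by rewrite /strict_trail /= -!andbA; do !bool_congr. Qed.

Lemma is_walk_sub P Q v s : (forall e, P e \subset Q e) -> is_walk P v s -> is_walk Q v s.
Proof.
move=> PQ; elim: s v => [|[e w] s IH] v //= /and4P[vw ve we walk_s].
by rewrite vw (subsetP (PQ e)) ?(subsetP (PQ e) w) ?IH.
Qed.

Lemma eq_is_walk P Q v s : {in map fst s, P =1 Q} -> is_walk P v s = is_walk Q v s.
Proof.
elim: s v => [|[e w] s IH] v //= PQ.
by rewrite PQ ?mem_head // IH // => f fs; apply: PQ; rewrite inE fs orbT.
Qed.

Lemma closed_walk_size P v s : is_walk P v s -> walk_end v s = v -> s != [::] -> 1 < size s.
Proof. by case: s => [|[e w] [|p s]] //= /andP[vw _] wv; rewrite wv eqxx in vw. Qed.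

Lemma size_strict_trail P v s : strict_trail P v s -> size s <= #|E|.
Proof. by case/andP=> _ uniq_s; rewrite -(size_map fst) -(card_uniqP uniq_s) max_card. Qed.

Lemma closed_trail_rot P v s1 s2 :
  strict_trail P v (s1 ++ s2) -> walk_end v (s1 ++ s2) = v ->
  strict_trail P (walk_end v s1) (s2 ++ s1) /\
  walk_end (walk_end v s1) (s2 ++ s1) = walk_end v s1.
Proof.
rewrite /strict_trail !map_cat last_cat is_walk_cat => /andP[/andP[walk1 walk2] uniq_s] closed.
by rewrite is_walk_cat walk2 closed walk1 uniq_catC uniq_s last_cat closed.
Qed.

Lemma odd_count_walk P v s x : (forall e, #|P e| = 2) -> is_walk P v s ->
  odd (count (fun p => x \in P p.1) s) = (x == v) (+) (x == walk_end v s).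
Proof.
move=> P2; elim: s v => [|[e w] s IH] v /=; first by rewrite addbb.
case/and4P=> vw ve we walk_s; rewrite (card2_eq (P2 e) ve we vw) oddD (IH w walk_s) !inE oddb.
case: (eqVneq x v) => [->|_]; rewrite ?eqxx ?(negbTE vw).
  by case: (_ == walk_end w s).
by case: (_ == w); case: (_ == walk_end w s).
Qed.

End Walks.

Section TrailExtension.
Variables (V E : finType) (P : E -> {set V}).
Hypothesis P2 : forall e, #|P e| = 2.

Lemma trail_extend_end v s g : strict_trail P v s -> g \notin map fst s ->
  walk_end v s \in P g -> exists w, strict_trail P v (rcons s (g, w)).
Proof.
move=> trail gs ug; have [w wg wu] := card2_other (P2 g) ug.
by exists w; rewrite strict_trail_rcons trail gs eq_sym wu ug wg.
Qed.

Lemma open_trail_extend v s : even_degrees P -> strict_trail P v s ->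
  walk_end v s != v -> exists p, strict_trail P v (rcons s p).
Proof.
move=> evenP trail open; set u := walk_end v s in open.
have [g /andP[ug gs]] : exists g, (u \in P g) && (g \notin map fst s).
  apply/existsP; apply: contraT; rewrite negb_exists => /forallP no_new_edge.
  move/andP: trail (evenP u) => [walk_s uniq_s]; rewrite /hdeg.
  rewrite -(count_uniq_card uniq_s) => [|f uf]; last first.
    by move: (no_new_edge f); rewrite uf /= negbK.
  by rewrite count_map (odd_count_walk u P2 walk_s) eqxx (negbTE open).
by have [w] := trail_extend_end trail gs ug; exists (g, w).
Qed.

Lemma closed_trail_extend_at v s1 s2 g :
  strict_trail P v (s1 ++ s2) -> walk_end v (s1 ++ s2) = v ->
  g \notin map fst (s1 ++ s2) -> walk_end v s1 \in P g ->
  exists u s, strict_trail P u s /\ size s = (size (s1 ++ s2)).+1.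
Proof.
move=> trail closed gs ug; have [trail' closed'] := closed_trail_rot trail closed.
have gs' : g \notin map fst (s2 ++ s1) by rewrite !map_cat mem_cat orbC -mem_cat -map_cat.
have ug' : walk_end (walk_end v s1) (s2 ++ s1) \in P g by rewrite closed'.
have [w trail_w] := trail_extend_end trail' gs' ug'.
by exists (walk_end v s1), (rcons (s2 ++ s1) (g, w)); rewrite size_rcons !size_cat addnC.
Qed.

End TrailExtension.

Section Switch.
Variables (V E : finType) (inc : E -> {set V}).
Hypothesis inc3 : three_uniform inc.
Variable P : E -> {set V}.
Hypotheses (pairP : pairing inc P) (evenP : even_degrees P).

Lemma pairing_switch e g x c y d : e != g ->
  P e = [set x; c] -> P g = [set y; d] -> x \in inc g -> y \in inc e ->
  c \notin inc g -> d \notin inc e ->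
  exists Q, [/\ pairing inc Q, even_degrees Q, Q e = [set y; c], Q g = [set x; d]
              & forall f, f != e -> f != g -> Q f = P f].
Proof.
move=> eg Pe Pg xg ye cg de.
have [sub_e card_e] := pairP e; have [sub_g card_g] := pairP g.
have xe : x \in inc e by apply/(subsetP sub_e); rewrite Pe set21.
have yg : y \in inc g by apply/(subsetP sub_g); rewrite Pg set21.
have ce : c \in inc e by apply/(subsetP sub_e); rewrite Pe set22.
have dg : d \in inc g by apply/(subsetP sub_g); rewrite Pg set22.
have xc : x != c by apply: cards2_neq; rewrite -Pe.
have yd : y != d by apply: cards2_neq; rewrite -Pg.
have xd : x != d by apply: contraNneq de => <-.
have yc : y != c by apply: contraNneq cg => <-.
pose Q f := if f == e then [set y; c] else if f == g then [set x; d] else P f.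
have QP f : f != e -> f != g -> Q f = P f by rewrite /Q => /negbTE-> /negbTE->.
have Qe : Q e = [set y; c] by rewrite /Q eqxx.
have Qg : Q g = [set x; d] by rewrite /Q eq_sym (negbTE eg) eqxx.
exists Q; split=> // [f|z].
  case: (eqVneq f e) => [->|fe]; first by rewrite Qe subUset !sub1set ye ce cards2 yc.
  case: (eqVneq f g) => [->|fg]; first by rewrite Qg subUset !sub1set xg dg cards2 xd.
  by rewrite QP //; apply: pairP.
rewrite (hdeg_eq2 eg QP) ?evenP // Qe Qg Pe Pg !mem_set2_nat //.
by case: (z == x); case: (z == y); case: (z == c); case: (z == d).
Qed.

Lemma pairing_other_notin e g x y :
  #|inc e :&: inc g| = 2 -> [disjoint P e & P g] ->
  x \in P e -> x \in inc g -> y \in P g -> y \in inc e ->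
  exists2 c, P e = [set x; c] & c \notin inc g.
Proof.
move=> card_eg disj xPe xg yPg ye; have [sub_e card_e] := pairP e.
have [c cPe cx] := card2_other card_e xPe.
exists c; first by apply: card2_eq; rewrite // eq_sym.
have xy : x != y by apply: contraTneq yPg => <-; apply: negbT (disjointFr disj xPe).
apply/negP => cg; have [sub_g _] := pairP g.
have xI : x \in inc e :&: inc g by rewrite inE xg (subsetP sub_e).
have yI : y \in inc e :&: inc g by rewrite inE ye (subsetP sub_g).
have cI : c \in inc e :&: inc g by rewrite inE cg (subsetP sub_e).
move: cI; rewrite (card2_eq card_eg xI yI xy) !inE (negbTE cx) /= => /eqP cy.
by move: cPe; rewrite cy (disjointFl disj yPg).
Qed.

Lemma disjoint_pairs_cross e g : #|inc e :&: inc g| = 2 -> [disjoint P e & P g] ->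
  exists x c y d, [/\ P e = [set x; c], P g = [set y; d], x \in inc g, y \in inc e
                    & c \notin inc g /\ d \notin inc e].
Proof.
move=> card_eg disj; have [sub_e card_e] := pairP e; have [sub_g card_g] := pairP g.
have [x] : exists x, x \in P e :&: (inc e :&: inc g).
  by apply: meet_of_large_subsets sub_e (subsetIl _ _) _; rewrite inc3 card_e card_eg.
rewrite !inE => /and3P[xPe _ xg].
have [y] : exists y, y \in P g :&: (inc e :&: inc g).
  by apply: meet_of_large_subsets sub_g (subsetIr _ _) _; rewrite inc3 card_g card_eg.
rewrite !inE => /and3P[yPg ye _].
have [c Pe cg] := pairing_other_notin card_eg disj xPe xg yPg ye.
have card_ge : #|inc g :&: inc e| = 2 by rewrite setIC.
have disj_ge : [disjoint P g & P e] by rewrite disjoint_sym.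
have [d Pg de] := pairing_other_notin card_ge disj_ge yPg ye xPe xg.
by exists x, c, y, d.
Qed.

Lemma closed_trail_switch v X e g :
  strict_trail P v (rcons X (e, v)) -> g \notin map fst (rcons X (e, v)) ->
  #|inc e :&: inc g| = 2 -> [disjoint P e & P g] ->
  exists Q u s, [/\ pairing inc Q, even_degrees Q, strict_trail Q u s
                  & size s = (size X).+2].
Proof.
rewrite strict_trail_rcons => /and5P[trailX eX uv uPe vPe].
set u := walk_end v X in uv uPe.
rewrite map_rcons mem_rcons inE negb_or => /andP[ge gX] card_eg disj.
have [x [c [y [d [Pe Pg xg ye [cg de]]]]]] := disjoint_pairs_cross card_eg disj.
have eg : e != g by rewrite eq_sym.
have [Q [pairQ evenQ Qe Qg QP]] := pairing_switch eg Pe Pg xg ye cg de.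
have [_ card_e] := pairP e; have Puv := card2_eq card_e uPe vPe uv.
have cx : c != x by rewrite eq_sym; apply: cards2_neq; rewrite -Pe.
have yc : y != c by apply: cards2_neq; rewrite -Qe; apply: (pairQ e).2.
have xd : x != d by apply: cards2_neq; rewrite -Qg; apply: (pairQ g).2.
have trailQX : strict_trail Q v X.
  move: trailX; rewrite /strict_trail (@eq_is_walk _ _ Q P) // => f fX.
  by apply: QP; apply: contraTneq fX => ->.
have e_notin : e \notin map fst (rcons X (g, d)).
  by rewrite map_rcons mem_rcons inE negb_or eg.
have g_notin : g \notin map fst (rcons X (e, y)).
  by rewrite map_rcons mem_rcons inE negb_or ge.
have : c \in [set u; v] by rewrite -Puv Pe set22.
have : x \in [set u; v] by rewrite -Puv Pe set21.
rewrite !inE => /orP[] /eqP xuv; rewrite -xuv (negbTE cx) ?orbF => /eqP cuv; exists Q.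
- exists y, ((e, v) :: rcons X (g, d)); split=> //; last by rewrite /= size_rcons.
  rewrite strict_trail_cons strict_trail_rcons trailQX Qe Qg e_notin gX -/u -xuv xd -cuv yc.
  by rewrite !inE !eqxx !orbT.
- exists d, ((g, v) :: rcons X (e, y)); split=> //; last by rewrite /= size_rcons.
  rewrite strict_trail_cons strict_trail_rcons trailQX Qe Qg g_notin eX -/u -xuv eq_sym xd.
  by rewrite -cuv eq_sym yc !inE !eqxx !orbT.
Qed.

End Switch.

Section Growth.
Variables (V E : finType) (inc : E -> {set V}).
Hypotheses (inc3 : three_uniform inc) (conn : L2_connected inc).

Lemma closed_trail_grow P v s : pairing inc P -> even_degrees P ->
  strict_trail P v s -> walk_end v s = v -> s != [::] -> size s < #|E| ->
  exists Q u s', [/\ pairing inc Q, even_degrees Q, strict_trail Q u s'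
                   & size s' = (size s).+1].
Proof.
move=> pairP evenP trail closed s_ne s_small; have P2 e := (pairP e).2.
pose F := [set f in map fst s].
have F0 : F != set0.
  apply/set0Pn; case: s s_ne {trail closed s_small} @F => [|[f w] s] // _.
  by exists f; rewrite inE mem_head.
have FT : F != setT.
  apply: contraTneq s_small => FT; rewrite -leqNgt -(size_map fst) cardE.
  by apply: uniq_leq_size (enum_uniq _) _ => f _; have := in_setT f; rewrite -FT inE.
have [g [e [gF eF ge]]] := L2_boundary conn F0 FT; rewrite !inE in gF eF.
have card_eg : #|inc e :&: inc g| = 2 by move: ge; rewrite L2adj_sym => /andP[_ /eqP].
case/mapP: eF => -[e' w] ew /= ee; subst e'.
case/splitPr: ew trail closed gF => s1 s2 trail closed gs.
set u := walk_end v s1.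
have [uw uPe wPe] : [/\ u != w, u \in P e & w \in P e].
  by move: (trail) => /andP[]; rewrite is_walk_cat /= => /andP[_ /and4P[]].
case: (set_0Vmem (P e :&: P g)) => [no_meet | [z]].
  have disj : [disjoint P e & P g] by rewrite -setI_eq0 no_meet.
  rewrite -cat_rcons in trail closed gs.
  have [trail' closed'] := closed_trail_rot trail closed.
  rewrite map_rcons last_rcons -rcons_cat in trail' closed'.
  have gs' : g \notin map fst (rcons (s2 ++ s1) (e, w)).
    by rewrite rcons_cat !map_cat mem_cat orbC -mem_cat -map_cat.
  have [Q [u' [s' [pairQ evenQ trailQ size_s']]]] :=
    closed_trail_switch inc3 pairP evenP trail' gs' card_eg disj.
  by exists Q, u', s'; rewrite size_s' !size_cat /= addnS addnC.
rewrite inE (card2_eq (P2 e) uPe wPe uw) !inE => /andP[/orP[] /eqP-> zPg].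
  have [u' [s' [trail' size_s']]] := closed_trail_extend_at P2 trail closed gs zPg.
  by exists P, u', s'.
rewrite -cat_rcons in trail closed gs.
have ug : walk_end v (rcons s1 (e, w)) \in P g by rewrite map_rcons last_rcons.
have [u' [s' [trail' size_s']]] := closed_trail_extend_at P2 trail closed gs ug.
by exists P, u', s'; rewrite size_s' cat_rcons.
Qed.

Lemma strict_trail_grow P v s : pairing inc P -> even_degrees P ->
  strict_trail P v s -> size s < #|E| ->
  exists Q u s', [/\ pairing inc Q, even_degrees Q, strict_trail Q u s'
                   & size s' = (size s).+1].
Proof.
move=> pairP evenP trail s_small; have P2 e := (pairP e).2.
have [closed | open] := eqVneq (walk_end v s) v; last first.
  have [p trail'] := open_trail_extend P2 evenP trail open.
  by exists P, v, (rcons s p); rewrite size_rcons.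
have [-> | s_ne] := eqVneq s [::]; last exact: closed_trail_grow pairP evenP trail closed s_ne s_small.
have /card_gt0P[g _] : 0 < #|E| by apply: leq_ltn_trans s_small.
have /card_gt0P[z zg] : 0 < #|P g| by rewrite P2.
have [w trail'] := trail_extend_end P2 (isT : strict_trail P z [::]) isT zg.
by exists P, z, [:: (g, w)].
Qed.

Lemma exists_trail_of_size n : 0 < #|E| -> no_pendant inc -> n <= #|E| ->
  exists P v s, [/\ pairing inc P, even_degrees P, strict_trail P v s & size s = n].
Proof.
move=> E0 no_pend; elim: n => [_ | n IH n_small].
  have [P [pairP evenP]] := exists_even_pairing inc3 conn E0 no_pend.
  have /card_gt0P[e _] := E0; have /card_gt0P[v _] : 0 < #|inc e| by rewrite inc3.
  by exists P, v, [::].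
have [P [v [s [pairP evenP trail size_s]]]] := IH (ltnW n_small); subst n.
exact: (strict_trail_grow pairP evenP trail n_small).
Qed.

End Growth.

Theorem corollary2p37 (V E : finType) (inc : E -> {set V}) :
  0 < #|E| ->
  three_uniform inc ->
  no_pendant inc ->
  L2_connected inc ->
  eulerian inc.
Proof.
move=> E0 inc3 no_pend conn.
have [P [v [s [pairP evenP trail size_s]]]] :=
  exists_trail_of_size inc3 conn E0 no_pend (leqnn #|E|).
have closed : walk_end v s = v.
  apply/eqP; apply: contraT => open.
  have [p] := open_trail_extend (fun e => (pairP e).2) evenP trail open.
  by move/size_strict_trail; rewrite size_rcons size_s ltnn.
have s_ne : s != [::] by rewrite -size_eq0 size_s -lt0n.
have /andP[walk_s uniq_s] := trail.
exists v, s; rewrite /euler_tour /closed_walk /strict_trail closed eqxx uniq_s.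
rewrite (is_walk_sub (fun e => (pairP e).1) walk_s) (closed_walk_size walk_s closed s_ne) /=.
apply/allP=> e _; apply: contraT => e_new.
have : #|e :: map fst s| <= #|E| := max_card _.
by rewrite (card_uniqP _) /= ?e_new ?uniq_s // size_map size_s ltnn.
Qed.
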